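(* Let $N$ and $n$ be positive integers. Let $G$ be the complete graph on a vertex set $A$ and let $(A_i)_{i=1}^{n}$ be a partition of $A$ into pairwise disjoint sets with $|A_i|\ge N$ for every $i\in[n]$. Then for any $2$-colouring (red/blue) of the edges of $G$, either there is a red path $u_1u_2\cdots u_n$ with $u_i\in A_i$ for each $i\in[n]$, or for some $i\in[n-1]$ there exist $B_i\subseteq A_i$ and $B_{i+1}\subseteq A_{i+1}$ with $\min\{|B_i|,|B_{i+1}|\}\ge N/2$ such that all edges between $B_i$ and $B_{i+1}$ are blue. *)

From mathcomp Require Import all_boot.
Set Implicit Arguments. Unset Strict Implicit. Unset Printing Implicit Defensive.

From mathcomp Require Import all_boot.
From mathcomp Require Import zify.

(* Let R_i be the set of vertices y of A_i that are the last
   vertex of a red path u_0 u_1 ... u_i with u_j in A_j (so R_0 = A_0 and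
   R_{i+1} is the set of red neighbours in A_{i+1} of R_i).  By construction
   every edge between R_i and A_{i+1} \ R_{i+1} is blue.  If some R_i is
   small (2|R_i| < N), take the first such index i+1 (i = 0 is impossible
   since R_0 = A_0): then 2|R_i| >= N, and since |A_{i+1}| >= N the
   complement A_{i+1} \ R_{i+1} has at least N/2 elements, giving the blue
   bipartite pair.  Otherwise R_{n-1} is nonempty and any of its vertices
   ends a red path through all the parts. *)

Section RedReach.
Variables (T : finType) (A : nat -> {set T}) (red : T -> T -> bool).

Fixpoint reach (i : nat) : {set T} :=
  if i is k.+1 then [set y in A k.+1 | [exists x in reach k, red x y]]
  else A 0.

Lemma reach_sub i : reach i \subset A i.
Proof.
by case: i => [|i] //=; apply/subsetP => y; rewrite inE => /andP [].
Qed.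

Lemma reach_path i y : y \in reach i -> exists u : nat -> T,
  [/\ forall j, j <= i -> u j \in A j,
      forall j, j < i -> red (u j) (u j.+1) & u i = y].
Proof.
elim: i y => [|i IH] y /=.
  by move=> Hy; exists (fun _ => y); split => // j; rewrite leqn0 => /eqP ->.
rewrite inE => /andP [HyA /existsP [x /andP [Hx Hxy]]].
have [u [uA ured ui]] := IH x Hx.
exists (fun j => if j == i.+1 then y else u j); split; last by rewrite eqxx.
- move=> j; rewrite leq_eqVlt ltnS => /orP [/eqP -> | Hj]; first by rewrite eqxx.
  by rewrite ltn_eqF ?ltnS //; apply: uA.
- move=> j; rewrite ltnS leq_eqVlt => /orP [/eqP -> | Hj].
    by rewrite eqxx ltn_eqF // ui.
  rewrite (ltn_eqF (leqW Hj)) (ltn_eqF (Hj : j.+1 < i.+1)).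
  exact: ured.
Qed.

Lemma reach_blue i x y :
  x \in reach i -> y \in A i.+1 :\: reach i.+1 -> ~~ red x y.
Proof.
move=> Hx; rewrite !inE => /andP [Hy HyA]; apply: contra Hy => Hxy.
by rewrite HyA; apply/existsP; exists x; rewrite Hx.
Qed.

End RedReach.
Arguments reach {T} A red i.
Arguments reach_sub {T} A red i.
Arguments reach_path {T A red i y}.

Lemma half_complement (T : finType) (N : nat) (S A : {set T}) :
  S \subset A -> N <= #|A| -> 2 * #|S| < N -> N <= 2 * #|A :\: S|.
Proof.
move=> /setIidPr SA; rewrite -(cardsID S A) SA.
by move: #|S| #|A :\: S| => s c; lia.
Qed.

Lemma reach_large_or_blue {N n : nat} {T : finType} {A : nat -> {set T}}
    (red : T -> T -> bool) (hsize : forall i, i < n -> N <= #|A i|) {i} :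
  i < n ->
  N <= 2 * #|reach A red i| \/
  (exists i, i.+1 < n /\
     exists (B1 B2 : {set T}),
       [/\ B1 \subset A i, B2 \subset A i.+1,
           N <= 2 * #|B1|, N <= 2 * #|B2| &
           forall x y, x \in B1 -> y \in B2 -> ~~ red x y]).
Proof.
elim: i => [|i IH] Hi.
  by left; apply: leq_trans (hsize 0 Hi) _; rewrite leq_pmull.
case: (IH (ltnW Hi)) => [large_i|]; last by right.
case: (leqP N (2 * #|reach A red i.+1|)) => [|small]; first by left.
right; exists i; split => //.
exists (reach A red i), (A i.+1 :\: reach A red i.+1); split.
- exact: reach_sub.
- exact: subsetDl.
- exact: large_i.
- by apply: half_complement => //; [exact: reach_sub | exact: hsize].
- exact: reach_blue.
Qed.

Theorem lemmal (N n : nat) (T : finType) (A : nat -> {set T})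
    (red : T -> T -> bool)
    (hN : 0 < N) (hn : 0 < n)
    (hcover : forall x : T, exists2 i, i < n & x \in A i)
    (hdisj : forall i j, i < n -> j < n -> i != j -> [disjoint A i & A j])
    (hsize : forall i, i < n -> N <= #|A i|)
    (hsym : forall x y, red x y = red y x) :
  (exists u : nat -> T,
      (forall i, i < n -> u i \in A i) /\
      (forall i, i.+1 < n -> red (u i) (u i.+1)))
  \/
  (exists i, i.+1 < n /\
     exists (B1 B2 : {set T}),
       [/\ B1 \subset A i, B2 \subset A i.+1,
           N <= 2 * #|B1|, N <= 2 * #|B2| &
           forall x y, x \in B1 -> y \in B2 -> ~~ red x y]).
Proof.
have last_lt : n.-1 < n by rewrite prednK.
case: (reach_large_or_blue red hsize last_lt) => [large|]; last by right.
have /card_gt0P [y Hy] : 0 < #|reach A red n.-1|.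
  by move: large; rewrite lt0n; apply: contraTneq => ->; rewrite -ltnNge.
have [u [uA ured _]] := reach_path Hy.
left; exists u; split => i Hi.
- by apply: uA; rewrite -ltnS prednK.
- by apply: ured; rewrite -ltnS prednK.
Qed.
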